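(* Let $V=\{(a_1,a_2,\ldots)\mid a_i\in\mathbb{C},\ \sum_i|a_i|^2<\infty\}$ with quadratic form $f((a_i))=\sum_i a_i^2$, let $A=Cl(V,f)$ be its Clifford algebra, and let $\mathcal{V}=\{v_i\mid i\ge1\}$, where $v_i$ is the sequence with $1$ in position $i$ and $0$ elsewhere. Then the centralizer of $\mathcal{V}$ in $A$ is $\mathbb{C}\cdot1$.
   Context: The Clifford algebra $Cl(V,f)$ is the unital associative $\mathbb{C}$-algebra generated by $V$ and $1$ subject to $v^2=f(v)\cdot1$ for all $v\in V$. The centralizer of a subset $S$ is $\{a\in A\mid as=sa \text{ for all } s\in S\}$. *)

From HB Require Import structures.
From mathcomp Require Import all_boot all_order all_algebra.
From mathcomp Require Import all_classical all_reals all_analysis.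
From mathcomp Require Import complex.
Set Implicit Arguments. Unset Strict Implicit. Unset Printing Implicit Defensive.
Import Order.TTheory GRing.Theory Num.Theory.
Import numFieldNormedType.Exports.
Local Open Scope ring_scope.

(* square-summable complex sequences (index i >= 1 of the paper is n = i-1 here) *)
Definition ell2 (R : realType) (a : nat -> R[i]) : Prop :=
  cvgn (series (fun n => complex.Re (a n) ^+ 2 + complex.Im (a n) ^+ 2)).

Definition l2 (R : realType) := {a : nat -> R[i] | ell2 a}.

(* the quadratic form f((a_n)) = sum_n a_n^2, the complex series being summed
   through its real and imaginary parts (it converges absolutely on V) *)
Definition qform (R : realType) (a : nat -> R[i]) : R[i] :=
  Complex (limn (series (fun n => complex.Re (a n ^+ 2))))
          (limn (series (fun n => complex.Im (a n ^+ 2)))).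

Definition delta_seq (R : realType) (i : nat) : nat -> R[i] :=
  fun n => (n == i)%:R.

Lemma ell2_delta (R : realType) (i : nat) : ell2 (delta_seq R i).
Proof.
rewrite /ell2; apply: (@is_cvg_near_cst _ _ (1:R)).
exists i.+1 => // n /= hn.
rewrite seriesEnat /=.
rewrite big_mkord (bigD1 (Ordinal hn)) //= big1 ?addr0.
  by rewrite /delta_seq eqxx /= expr1n expr0n addr0.
move=> k hk; rewrite /delta_seq.
have -> : (nat_of_ord k == i) = false.
  by apply/negbTE; apply: contra hk => /eqP e; apply/eqP/val_inj.
by rewrite /= expr0n addr0.
Qed.

Definition basis_vec (R : realType) (i : nat) : l2 R :=
  exist _ (delta_seq R i) (@ell2_delta R i).

Definition clifford_map (R : realType) (B : algType R[i]) (j : l2 R -> B) : Prop :=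
  (forall (c : R[i]) (x y z : l2 R),
      proj1_sig z = (fun n => c * proj1_sig x n + proj1_sig y n) ->
      j z = c *: j x + j y)
  /\ (forall x : l2 R, j x * j x = (qform (proj1_sig x))%:A).

Definition alg_hom (R : realType) (A B : algType R[i]) (phi : A -> B) : Prop :=
  (forall (c : R[i]) (x y : A), phi (c *: x + y) = c *: phi x + phi y)
  /\ (forall x y : A, phi (x * y) = phi x * phi y)
  /\ phi 1 = 1.

(* (A, iota) is the Clifford algebra Cl(V,f): the universal unital C-algebra
   generated by V with v^2 = f(v) 1 (presentation = universal property). *)
Definition is_clifford (R : realType) (A : algType R[i]) (iota : l2 R -> A) : Prop :=
  clifford_map iota /\
  forall (B : algType R[i]) (j : l2 R -> B), clifford_map j ->
    (exists phi : A -> B, alg_hom phi /\ forall x, phi (iota x) = j x) /\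
    (forall phi1 phi2 : A -> B, alg_hom phi1 -> alg_hom phi2 ->
       (forall x, phi1 (iota x) = j x) -> (forall x, phi2 (iota x) = j x) ->
       forall a, phi1 a = phi2 a).

From HB Require Import structures.
From mathcomp Require Import all_boot all_order all_algebra.
From mathcomp Require Import all_classical all_reals all_analysis.
From mathcomp Require Import complex ring lra.

(* The parity automorphism alpha of Cl(V, f), with alpha v = - v on V, splits an element a
   commuting with every v_i into an even and an odd part, which still commute with the v_i.
   Both parts lie in the subalgebra generated by finitely many vectors of V, and for odd E
   the supercommutator [E, x] = E x - alpha(x) E lowers the degree in these generators,
   because E v + v E is a scalar for v in V.
   Odd part: if v_i x + alpha(x) v_i = 0 for all i >= m, then [v_m, x] = 2 v_m x has lower
   degree and satisfies the same condition for all i > m; induction on the degree gives x = 0.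
   Even part: as only 0 in V anticommutes with every v_n, a Gram-Schmidt procedure yields,
   for the generators u_1, ..., u_k involved, finite combinations E_1, ..., E_k of the v_n
   with E_p u_q + u_q E_p = delta_pq.  They commute with the even part x, so [E_p, x] = 0;
   as [E_p, y + u_p z] = z when y and z do not involve u_p, x involves no u_p: it is a scalar. *)

Set Implicit Arguments. Unset Strict Implicit. Unset Printing Implicit Defensive.
Import Order.TTheory GRing.Theory Num.Theory.
Import numFieldNormedType.Exports.
Local Open Scope classical_set_scope.
Local Open Scope ring_scope.

Section SquareSummable.
Variable R : realType.
Implicit Types (z w : R[i]) (u : nat -> R[i]).
Local Notation Re := complex.Re.
Local Notation Im := complex.Im.

Lemma ReD z w : Re (z + w) = Re z + Re w. Proof. by case: z; case: w. Qed.
Lemma ImD z w : Im (z + w) = Im z + Im w. Proof. by case: z; case: w. Qed.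
Lemma ReM z w : Re (z * w) = Re z * Re w - Im z * Im w.
Proof. by case: z; case: w. Qed.
Lemma ImM z w : Im (z * w) = Re z * Im w + Im z * Re w.
Proof. by case: z; case: w. Qed.

Lemma complexP z w : Re z = Re w -> Im z = Im w -> z = w.
Proof. by case: z; case: w => ? ? ? ? /= -> ->. Qed.

Lemma ell2_lin (c : R[i]) u v : ell2 u -> ell2 v -> ell2 (fun n => c * u n + v n).
Proof.
rewrite /ell2 => cu cv.
pose sq z := Re z ^+ 2 + Im z ^+ 2.
have sq_ge0 z : 0 <= sq z by rewrite addr_ge0 ?sqr_ge0.
apply: (@series_le_cvg _ _ ((2 * sq c) *: (sq \o u) + 2 *: (sq \o v))) => [n|n|n|].
- exact: sq_ge0.
- by rewrite !fctE addr_ge0 ?mulr_ge0.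
- (* |c u + v|^2 <= 2 |c|^2 |u|^2 + 2 |v|^2, the difference being |c u - v|^2 *)
  rewrite !fctE /sq ReD ImD ReM ImM -subr_ge0.
  set a := Re c; set b := Im c; set x := Re (u n); set y := Im (u n).
  set p := Re (v n); set q := Im (v n).
  suff -> : 2 * (a ^+ 2 + b ^+ 2) * (x ^+ 2 + y ^+ 2) + 2 * (p ^+ 2 + q ^+ 2)
     - ((a * x - b * y + p) ^+ 2 + (a * y + b * x + q) ^+ 2) =
     (a * x - b * y - p) ^+ 2 + (a * y + b * x - q) ^+ 2 by rewrite addr_ge0 ?sqr_ge0.
  ring.
- by apply: is_cvg_seriesD; apply: is_cvg_seriesZ.
Qed.

Lemma cvg_series_norm_le (f g : R ^nat) :
  (forall n, `|f n| <= g n) -> cvgn (series g) -> cvgn (series f).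
Proof.
move=> fg cg; apply: normed_cvg; apply: series_le_cvg cg => n //=; exact: le_trans (fg n).
Qed.

Lemma ell2_cvg_Re_sqr u : ell2 u -> cvgn (series (fun n => Re (u n ^+ 2))).
Proof.
apply: cvg_series_norm_le => n; rewrite expr2 ReM -!expr2.
by apply/ler_normlP; split; nra.
Qed.

Lemma ell2_cvg_Im_sqr u : ell2 u -> cvgn (series (fun n => Im (u n ^+ 2))).
Proof.
apply: cvg_series_norm_le => n; rewrite expr2 ImM.
set x := Re (u n); set y := Im (u n).
have := sqr_ge0 (x - y); have := sqr_ge0 (x + y).
by move=> ? ?; apply/ler_normlP; split; nra.
Qed.

Lemma cvg_series_delta n (c : R) : series (fun k => (k == n)%:R * c) @ \oo --> c.
Proof.
apply: cvg_near_cst; exists n.+1 => // N /= ltnN.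
rewrite /series /= (bigD1_seq n) ?mem_iota ?iota_uniq ?add0n ?subn0 //=.
by rewrite eqxx mul1r big1 ?addr0 // => k /negbTE ->; rewrite mul0r.
Qed.

Lemma lim_series_delta n (c : R) : limn (series (fun k => (k == n)%:R * c)) = c.
Proof. exact/cvg_lim/cvg_series_delta. Qed.

Lemma lim_series_add_delta (f : R ^nat) n (c : R) : cvgn (series f) ->
  limn (series (fun k => f k + (k == n)%:R * c)) = limn (series f) + c.
Proof.
move=> cf; rewrite -[fun k => _]/(f + fun k => (k == n)%:R * c).
by rewrite lim_seriesD ?lim_series_delta //; exact: cvg_series_delta.
Qed.

Lemma qform_delta n : qform (delta_seq R n) = 1.
Proof.
have Re_sq k : Re (delta_seq R n k ^+ 2) = (k == n)%:R * 1.
  by rewrite /delta_seq; case: (k == n); rewrite ?mulr1n ?mulr0n ?expr1n ?expr0n ?mul1r ?mul0r.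
have Im_sq k : Im (delta_seq R n k ^+ 2) = (k == n)%:R * 0.
  by rewrite /delta_seq; case: (k == n); rewrite ?mulr1n ?mulr0n ?expr1n ?expr0n ?mulr0.
apply: complexP; rewrite /qform /=; [rewrite (funext Re_sq) | rewrite (funext Im_sq)];
  exact: lim_series_delta.
Qed.

Lemma qform_add_delta n u : ell2 u ->
  qform (fun k => delta_seq R n k + u k) = qform u + 1 + 2 * u n.
Proof.
move=> u2.
have sq k : (delta_seq R n k + u k) ^+ 2 = u k ^+ 2 + (k == n)%:R * (1 + 2 * u n).
  rewrite /delta_seq; case: eqP => [->|_]; last by rewrite mulr0n add0r mul0r addr0.
  by rewrite !mulr1n mul1r; ring.
have Re_sq k : Re ((delta_seq R n k + u k) ^+ 2) =
    Re (u k ^+ 2) + (k == n)%:R * Re (1 + 2 * u n).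
  by rewrite sq ReD; case: (k == n); rewrite ?mulr1n ?mulr0n ?mul1r ?mul0r.
have Im_sq k : Im ((delta_seq R n k + u k) ^+ 2) =
    Im (u k ^+ 2) + (k == n)%:R * Im (1 + 2 * u n).
  by rewrite sq ImD; case: (k == n); rewrite ?mulr1n ?mulr0n ?mul1r ?mul0r.
apply: complexP; rewrite /qform -addrA /=.
- rewrite [RHS]ReD (funext Re_sq) lim_series_add_delta //; exact: ell2_cvg_Re_sqr.
- rewrite [RHS]ImD (funext Im_sq) lim_series_add_delta //; exact: ell2_cvg_Im_sqr.
Qed.
End SquareSummable.

Section Filtration.
Variables (K : pzRingType) (A : lalgType K).
Implicit Types (G H : set A) (x y : A).

Inductive filt G : nat -> A -> Prop :=
  | filt1 d : filt G d 1
  | filtD d x y : filt G d x -> filt G d y -> filt G d (x + y)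
  | filtZ d (c : K) x : filt G d x -> filt G d (c *: x)
  | filtM d g x : G g -> filt G d x -> filt G d.+1 (g * x).

Lemma filt_le G d d' x : (d <= d')%N -> filt G d x -> filt G d' x.
Proof.
move=> + hx; elim: hx d' => {d x} [d|d x y _ IHx _ IHy|d c x _ IH|d g x Gg _ IH] d' le.
- exact: filt1.
- exact: filtD (IHx _ le) (IHy _ le).
- exact: filtZ (IH _ le).
- by case: d' le => // d' le; apply: filtM (IH _ le).
Qed.

Lemma filt_sub G H d x : G `<=` H -> filt G d x -> filt H d x.
Proof.
move=> GH; elim=> {d x} [d|d x y _ IHx _ IHy|d c x _ IH|d g x Gg _ IH].
- exact: filt1.
- exact: filtD.
- exact: filtZ.
- exact: filtM (GH _ Gg) IH.
Qed.

Lemma filt0 G d : filt G d 0.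
Proof. by rewrite -(scale0r 1); apply/filtZ/filt1. Qed.

Lemma filtN G d x : filt G d x -> filt G d (- x).
Proof. by rewrite -scaleN1r; apply: filtZ. Qed.

Lemma filtB G d x y : filt G d x -> filt G d y -> filt G d (x - y).
Proof. by move=> fx /filtN; apply: filtD. Qed.

Lemma filt_gen G g : G g -> filt G 1 g.
Proof. by move=> Gg; rewrite -[g]mulr1; apply/filtM/filt1. Qed.

Lemma filt_span G (I : eqType) (r : seq I) (F : I -> K) (f : I -> A) :
  (forall i, i \in r -> G (f i)) -> filt G 1 (\sum_(i <- r) F i *: f i).
Proof.
move=> Gf; rewrite big_seq; elim/big_ind: _ => [|x y|i ir].
- exact: filt0.
- exact: filtD.
- exact/filtZ/filt_gen/Gf.
Qed.

Lemma filt_mul G d d' x y : filt G d x -> filt G d' y -> filt G (d + d') (x * y).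
Proof.
move=> hx; elim: hx d' y => {d x} [d|d x y _ IHx _ IHy|d c x _ IH|d g x Gg _ IH] d' z fz.
- by rewrite mul1r; apply: filt_le fz; rewrite leq_addl.
- by rewrite mulrDl; apply: filtD; [apply: IHx | apply: IHy].
- by rewrite -scalerAl; apply/filtZ/IH.
- by rewrite -mulrA addSn; apply/filtM/IH.
Qed.

Lemma filt_subst G H d x : (forall g, G g -> filt H 1 g) -> filt G d x -> filt H d x.
Proof.
move=> GH; elim=> {d x} [d|d x y _ IHx _ IHy|d c x _ IH|d g x Gg _ IH].
- exact: filt1.
- exact: filtD.
- exact: filtZ.
- exact: filt_mul (GH _ Gg) IH.
Qed.

Lemma filt_deg0 G x : filt G 0 x -> exists c, x = c%:A.
Proof.
move: {-2}0%N (erefl 0%N) => d d0 hx.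
elim: hx d0 => {d x} [d|d x y _ IHx _ IHy|d c x _ IH|//] d0.
- by exists 1; rewrite scale1r.
- by have [[a ->] [b ->]] := (IHx d0, IHy d0); exists (a + b); rewrite scalerDl.
- by have [a ->] := IH d0; exists (c * a); rewrite scalerA.
Qed.

Lemma filt_set0 d x : filt set0 d x -> exists c, x = c%:A.
Proof.
elim=> {d x} [d|d x y _ [a ->] _ [b ->]|d c x _ [a ->]|d g x []].
- by exists 1; rewrite scale1r.
- by exists (a + b); rewrite scalerDl.
- by exists (c * a); rewrite scalerA.
Qed.

Lemma filt_finite G d x :
  filt G d x -> exists2 s : seq A, [set` s] `<=` G & filt [set` s] d x.
Proof.
elim=> {d x} [d|d x y _ [s sG fx] _ [t tG fy]|d c x _ [s sG fx]|d g x Gg _ [s sG fx]].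
- by exists [::]; [move=> ? | apply: filt1].
- exists (s ++ t); first by move=> g /=; rewrite mem_cat => /orP[/sG|/tG].
  by apply: filtD; [apply: filt_sub fx | apply: filt_sub fy] => g /=;
     rewrite mem_cat => ->; rewrite ?orbT.
- by exists s => //; apply: filtZ.
- exists (g :: s); first by move=> h /=; rewrite inE => /orP[/eqP ->|/sG].
  apply: filtM; first by rewrite /= mem_head.
  by apply: filt_sub fx => h /=; rewrite inE => ->; rewrite orbT.
Qed.
End Filtration.

Section LinClosed.
Variables (K : pzRingType) (V : lmodType K) (P : set V).
Hypothesis P_lin : forall (c : K) x y, P x -> P y -> P (c *: x + y).

Lemma lin_closed0 x : P x -> P 0.
Proof. by move=> Px; rewrite -(addNr x) -scaleN1r; apply: P_lin. Qed.

Lemma lin_closedB x y : P x -> P y -> P (x - y).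
Proof. by move=> Px Py; rewrite addrC -scaleN1r; apply: P_lin. Qed.

Lemma lin_closed_sum (I : eqType) (r : seq I) (F : I -> K) (f : I -> V) :
  P 0 -> (forall i, i \in r -> P (f i)) -> P (\sum_(i <- r) F i *: f i).
Proof.
move=> P0; elim: r => [|i r IH] Pf; first by rewrite big_nil.
rewrite big_cons; apply: P_lin; first by apply: Pf; rewrite mem_head.
by apply: IH => j jr; apply: Pf; rewrite inE jr orbT.
Qed.
End LinClosed.

Section Centralizer.
Variables (K : fieldType) (A : algType K).
Implicit Types (S : set A) (x y z g u E : A).

Definition acomm x y := x * y + y * x.

Lemma acommC x y : acomm x y = acomm y x.
Proof. exact: addrC. Qed.

Lemma acommBr x y z : acomm x (y - z) = acomm x y - acomm x z.
Proof. by rewrite /acomm mulrBr mulrBl addrACA opprD. Qed.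

Lemma acommBl x y z : acomm (x - y) z = acomm x z - acomm y z.
Proof. by rewrite ![acomm _ z]acommC acommBr. Qed.

Lemma acommZl (c : K) x y : acomm (c *: x) y = c *: acomm x y.
Proof. by rewrite /acomm -scalerAl -scalerAr scalerDr. Qed.

Lemma sqrrD_acomm x y : (x + y) * (x + y) = x * x + acomm x y + y * y.
Proof. by rewrite /acomm mulrDl !mulrDr !addrA. Qed.

Lemma commrZ (c : K) x y : GRing.comm x y -> GRing.comm x (c *: y).
Proof. by rewrite /GRing.comm -scalerAl -scalerAr => ->. Qed.

Lemma acomm_sumZr (I : Type) (r : seq I) (F : I -> K) (f : I -> A) x :
  acomm x (\sum_(i <- r) F i *: f i) = \sum_(i <- r) F i *: acomm x (f i).
Proof.
rewrite /acomm mulr_sumr mulr_suml -big_split; apply: eq_bigr => i _.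
by rewrite -scalerAr -scalerAl scalerDr.
Qed.

Lemma acomm_sumZl (I : Type) (r : seq I) (F : I -> K) (f : I -> A) x :
  acomm (\sum_(i <- r) F i *: f i) x = \sum_(i <- r) F i *: acomm (f i) x.
Proof. by rewrite acommC acomm_sumZr; under eq_bigr do rewrite acommC. Qed.

Variable alpha : {lrmorphism A -> A}.

Definition scomm E x := E * x - alpha x * E.

Lemma scommD E x y : scomm E (x + y) = scomm E x + scomm E y.
Proof. by rewrite /scomm rmorphD mulrDr mulrDl opprD addrACA. Qed.

Lemma scommZ E (c : K) x : scomm E (c *: x) = c *: scomm E x.
Proof. by rewrite /scomm linearZ -scalerAr -scalerAl scalerBr. Qed.

Lemma scomm_alg E (c : K) : scomm E c%:A = 0.
Proof. by rewrite /scomm rmorph_alg mulr_algr mulr_algl subrr. Qed.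

Lemma scomm1 E : scomm E 1 = 0.
Proof. by rewrite -(scale1r 1) scomm_alg. Qed.

Lemma scommM E g x : alpha g = - g -> scomm E (g * x) = acomm E g * x - g * scomm E x.
Proof.
move=> odd_g; rewrite /scomm /acomm rmorphM /= odd_g mulrDl mulrBr !mulrA !mulNr opprK.
by rewrite opprB addrACA subrr addr0.
Qed.

Variable G : set A.
Hypothesis G_lin : forall (c : K) x y, G x -> G y -> G (c *: x + y).
Hypothesis alphaG : forall g, G g -> alpha g = - g.
Hypothesis acommG : forall g h, G g -> G h -> exists c : K, acomm g h = c%:A.

Lemma filt_alpha S d x : S `<=` G -> filt S d x -> filt S d (alpha x).
Proof.
move=> SG; elim=> {d x} [d|d x y _ IHx _ IHy|d c x _ IH|d g x Sg _ IH].
- by rewrite rmorph1; apply: filt1.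
- by rewrite rmorphD; apply: filtD.
- by rewrite linearZ; apply: filtZ.
- by rewrite rmorphM /= alphaG ?mulNr; [apply/filtN/filtM | apply: SG].
Qed.

Lemma alphaK_filt S d x : S `<=` G -> filt S d x -> alpha (alpha x) = x.
Proof.
move=> SG; elim=> {d x} [d|d x y _ IHx _ IHy|d c x _ IH|d g x Sg _ IH].
- by rewrite !rmorph1.
- by rewrite !rmorphD /= IHx IHy.
- by rewrite !linearZ /= IH.
- by rewrite !rmorphM /= IH (alphaG (SG _ Sg)) raddfN /= (alphaG (SG _ Sg)) opprK.
Qed.

Lemma scomm_filt S E d x : S `<=` G -> (forall g, S g -> exists c : K, acomm E g = c%:A) ->
  filt S d x -> filt S d.-1 (scomm E x).
Proof.
move=> SG ES; elim=> {d x} [d|d x y _ IHx _ IHy|d c x _ IH|d g x Sg fx IH].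
- by rewrite scomm1; apply: filt0.
- by rewrite scommD; apply: filtD.
- by rewrite scommZ; apply: filtZ.
- have [c Eg] := ES g Sg; rewrite (scommM _ _ (alphaG (SG _ Sg))) Eg mulr_algl /=.
  apply: filtB; first exact: filtZ.
  case: d fx IH => [|d] fx IH; last exact: filtM.
  by have [a ->] := filt_deg0 fx; rewrite scomm_alg mulr0; apply: filt0.
Qed.

Lemma scomm_eq0 S E d x : S `<=` G -> (forall g, S g -> acomm E g = 0) ->
  filt S d x -> scomm E x = 0.
Proof.
move=> SG ES; elim=> {d x} [d|d x y _ IHx _ IHy|d c x _ IH|d g x Sg _ IH].
- exact: scomm1.
- by rewrite scommD IHx IHy addr0.
- by rewrite scommZ IH scaler0.
- by rewrite (scommM _ _ (alphaG (SG _ Sg))) ES // IH mul0r mulr0 subrr.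
Qed.

Hypothesis two_neq0 : (2 : K) != 0.

Lemma addrr_eq0 x : (x + x == 0) = (x == 0).
Proof. by rewrite -mulr2n -scaler_nat scaler_eq0 (negbTE two_neq0). Qed.

Variable e : nat -> A.
Hypothesis Ge : forall n, G (e n).
Hypothesis e_sqr : forall n, e n * e n = 1.
Hypothesis e_acomm : forall m n, m != n -> acomm (e m) (e n) = 0.

Lemma twisted_acomm_eq0 d x m : filt G d x ->
  (forall i, (m <= i)%N -> e i * x + alpha x * e i = 0) -> x = 0.
Proof.
elim: d x m => [|d IH] x m fx xe.
  have [c xc] := filt_deg0 fx; move: (xe m (leqnn m)).
  rewrite xc rmorph_alg mulr_algr mulr_algl => /eqP; rewrite addrr_eq0 => /eqP cem.
  by rewrite -(e_sqr m) scalerAl cem mul0r.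
have emx : scomm (e m) x = e m * x + e m * x.
  by move/eqP: (xe m (leqnn m)); rewrite /scomm addrC addr_eq0 => /eqP ->; rewrite opprK.
suff /eqP : scomm (e m) x = 0.
  by rewrite emx addrr_eq0 => /eqP /(congr1 ( *%R (e m))); rewrite mulrA e_sqr mul1r mulr0.
apply: (IH _ m.+1); first by apply: scomm_filt fx => // g; apply: acommG.
move=> i lt_mi.
have eie : e i * e m = - (e m * e i).
  by apply/eqP; rewrite -addr_eq0; apply/eqP/e_acomm; rewrite gtn_eqF.
have key : e i * (e m * x) + alpha (e m * x) * e i = 0.
  rewrite rmorphM /= (alphaG (Ge m)) mulrA eie !mulNr -!mulrA -opprD -mulrDr xe ?mulr0 ?oppr0 //.
  exact: ltnW.
by rewrite emx rmorphD /= mulrDr mulrDl addrACA key addr0.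
Qed.

Lemma sqrG g : G g -> exists c : K, g * g = c%:A.
Proof.
move=> Gg; have [c gg] := acommG Gg Gg; exists (c / 2).
apply: (scalerI two_neq0).
by rewrite [LHS]scaler_nat mulr2n -[_ + _]/(acomm g g) gg scalerA mulrCA mulfV ?mulr1.
Qed.

Lemma filt_decomp S u d x : S `<=` G -> G u -> filt (u |` S) d x ->
  exists y z, [/\ filt S d y, filt S d z & x = y + u * z].
Proof.
move=> SG Gu; elim=> {d x} [d|d x1 x2 _ [y1 [z1 [fy1 fz1 ->]]] _ [y2 [z2 [fy2 fz2 ->]]]|
  d c x _ [y [z [fy fz ->]]]|d g x [->|Sg] _ [y [z [fy fz ->]]]].
- by exists 1, 0; split; [exact: filt1 | exact: filt0 | rewrite mulr0 addr0].
- by exists (y1 + y2), (z1 + z2); split; [exact: filtD | exact: filtD | rewrite mulrDr addrACA].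
- by exists (c *: y), (c *: z); split; [exact: filtZ | exact: filtZ | rewrite scalerDr scalerAr].
- have [c uu] := sqrG Gu; exists (c *: z), y; split.
  + exact/filtZ/(filt_le (leqnSn d)).
  + exact: filt_le (leqnSn d) fy.
  + by rewrite mulrDr mulrA uu mulr_algl addrC.
- have [c gu] := acommG (SG _ Sg) Gu.
  exists (g * y + c *: z), (- (g * z)); split.
  + exact: filtD (filtM Sg fy) (filtZ _ (filt_le (leqnSn d) fz)).
  + exact/filtN/filtM.
  + have gu' : g * u = c%:A - u * g by rewrite -gu addrK.
    by rewrite mulrDr mulrA gu' mulrBl mulr_algl mulrN !mulrA addrA.
Qed.

(* [ps] lists pairs (u_p, E_p) with [acomm E_p u_q = delta_pq]. *)
Fixpoint dual (ps : seq (A * A)) : Prop :=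
  if ps is p :: ps' then
    [/\ acomm p.2 p.1 = 1,
        (forall q, q \in ps' -> acomm p.2 q.1 = 0 /\ acomm q.2 p.1 = 0) & dual ps']
  else True.

Lemma dual_sum ps r (F : A * A -> K) : dual ps -> r \in ps ->
  \sum_(p <- ps) F p *: acomm r.2 p.1 = (F r)%:A /\
  \sum_(p <- ps) F p *: acomm p.2 r.1 = (F r)%:A.
Proof.
elim: ps => // q ps IH [qq qps dps]; rewrite inE !big_cons => /predU1P [-> | r_ps].
  by split; rewrite qq big_seq big1 ?addr0 // => p /qps [h1 h2]; rewrite (h1, h2) scaler0.
have [h1 h2] := qps r r_ps; have [s1 s2] := IH dps r_ps.
by rewrite h1 h2 s1 s2 !scaler0 !add0r.
Qed.

Lemma dual_scalar ps d x : (forall p, p \in ps -> G p.1) -> dual ps ->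
  filt [set` map fst ps] d x -> (forall p, p \in ps -> scomm p.2 x = 0) ->
  exists c, x = c%:A.
Proof.
elim: ps x => [|q ps IH] x psG /=.
  by move=> _ fx _; apply: filt_set0; apply: filt_sub fx => g; rewrite /= in_nil.
move=> [qq qps dps] fx xq; have Gq := psG q (mem_head q ps).
have SG : [set` map fst ps] `<=` G.
  by move=> g /= /mapP [p p_ps ->]; apply: psG; rewrite inE p_ps orbT.
have qS : forall g, [set` map fst ps] g -> acomm q.2 g = 0.
  by move=> g /= /mapP [p /qps [+ _] ->].
have [|y [z [fy fz xyz]]] := filt_decomp SG Gq (filt_sub _ fx).
  by move=> g /=; rewrite inE => /predU1P [->|]; [left | right].
have z0 : z = 0.
  move: (xq q (mem_head q ps)); rewrite xyz scommD (scomm_eq0 SG qS fy) add0r.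
  by rewrite (scommM _ _ (alphaG Gq)) qq (scomm_eq0 SG qS fz) mulr0 subr0 mul1r.
move: fx xq; rewrite xyz z0 mulr0 addr0 => _ xq.
by apply: (IH y) => // p p_ps; [apply: psG | apply: xq]; rewrite inE p_ps orbT.
Qed.

Hypothesis G_nondeg : forall g, G g -> (forall n, acomm (e n) g = 0) -> g = 0.

Definition ecomm E := forall a, (forall n, GRing.comm (e n) a) -> GRing.comm E a.

Lemma ecomm_lin (c : K) E E' : ecomm E -> ecomm E' -> ecomm (c *: E + E').
Proof.
move=> hE hE' a ea.
by rewrite /GRing.comm mulrDl mulrDr -scalerAl -scalerAr (hE a ea) (hE' a ea).
Qed.

Lemma ecomm_e n : ecomm (e n).
Proof. by move=> a; apply. Qed.

Lemma ecomm0 : ecomm 0.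
Proof. by move=> a _; rewrite /GRing.comm mul0r mulr0. Qed.

Lemma acommG_coef (ps : seq (A * A)) (f : A * A -> A) y :
  (forall p, p \in ps -> G (f p)) -> G y ->
  exists F : A * A -> K, forall p, p \in ps -> acomm (f p) y = (F p)%:A.
Proof.
move=> Gf Gy.
have /choice [F hF] : forall p, exists c : K, p \in ps -> acomm (f p) y = c%:A.
  move=> p; case: (boolP (p \in ps)) => [/Gf Gp | _]; last by exists 0.
  by have [c hc] := acommG Gp Gy; exists c.
by exists F.
Qed.

Lemma dual_proj_vec ps w : dual ps -> (forall p, p \in ps -> G p.2) -> G w ->
  exists F : A * A -> K,
    forall q, q \in ps -> acomm q.2 (w - \sum_(p <- ps) F p *: p.1) = 0.
Proof.
move=> dps psG Gw; have [F hF] := acommG_coef psG Gw.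
by exists F => q q_ps; rewrite acommBr acomm_sumZr (dual_sum F dps q_ps).1 hF ?subrr.
Qed.

Lemma dual_proj_covec ps E : dual ps -> (forall p, p \in ps -> G p.1) -> G E ->
  exists F : A * A -> K,
    forall q, q \in ps -> acomm (E - \sum_(p <- ps) F p *: p.2) q.1 = 0.
Proof.
move=> dps psG GE; have [F hF] := acommG_coef psG GE.
by exists F => q q_ps; rewrite acommBl acomm_sumZl (dual_sum F dps q_ps).2 acommC hF ?subrr.
Qed.

Lemma G0 : G 0.
Proof. exact: (lin_closed0 (P := G) G_lin (Ge 0)). Qed.

Definition admissible (p : A * A) := [/\ G p.1, G p.2 & ecomm p.2].

Lemma dual_cons ps w : dual ps -> (forall p, p \in ps -> admissible p) -> G w -> w != 0 ->
  (forall q, q \in ps -> acomm q.2 w = 0) ->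
  exists E, admissible (w, E) /\ dual ((w, E) :: ps).
Proof.
move=> dps adm_ps Gw w_neq0 psw.
have ps1 p : p \in ps -> G p.1 by case/adm_ps.
have ps2 p : p \in ps -> G p.2 by case/adm_ps.
have ps3 p : p \in ps -> ecomm p.2 by case/adm_ps.
have [n en] : exists n, acomm (e n) w <> 0.
  by apply/existsNP => all0; move/eqP: w_neq0; apply; apply: G_nondeg Gw all0.
have [t et] := acommG (Ge n) Gw.
have t_neq0 : t != 0 by apply/eqP => t0; apply: en; rewrite et t0 scale0r.
pose E0 := t^-1 *: e n.
have E0w : acomm E0 w = 1 by rewrite acommZl et scalerA mulVf // scale1r.
have GE0 : G E0 by rewrite /E0 -[_ *: _]addr0; apply: G_lin (Ge n) G0.
have [F psE] := dual_proj_covec dps ps1 GE0.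
exists (E0 - \sum_(p <- ps) F p *: p.2); split; first split => //=.
- apply: (lin_closedB (P := G) G_lin GE0).
  exact: (lin_closed_sum (P := G) G_lin _ G0 ps2).
- apply: (lin_closedB (P := ecomm) ecomm_lin).
    by rewrite /E0 -[_ *: _]addr0; apply: ecomm_lin (ecomm_e n) ecomm0.
  exact: (lin_closed_sum (P := ecomm) ecomm_lin _ ecomm0 ps3).
- split => // [|q q_ps]; last by split; [apply: psE | apply: psw].
  rewrite acommBl acomm_sumZl E0w big_seq big1 ?subr0 // => p p_ps.
  by rewrite psw ?scaler0.
Qed.

Lemma dual_extend ps w : dual ps -> (forall p, p \in ps -> admissible p) -> G w ->
  exists ps', [/\ dual ps', forall p, p \in ps' -> admissible p,
                 {subset map fst ps <= map fst ps'} & filt [set` map fst ps'] 1 w].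
Proof.
move=> dps adm_ps Gw.
have ps1 p : p \in ps -> G p.1 by case/adm_ps.
have ps2 p : p \in ps -> G p.2 by case/adm_ps.
have [F psw] := dual_proj_vec dps ps2 Gw.
set w' := w - _ in psw; have Gw' : G w'.
  apply: (lin_closedB (P := G) G_lin Gw).
  exact: (lin_closed_sum (P := G) G_lin _ G0 ps1).
have filt_w S : filt S 1 w' -> (forall p, p \in ps -> S p.1) -> filt S 1 w.
  move=> fw' Sps; rewrite -(subrK (\sum_(p <- ps) F p *: p.1) w) -/w'.
  exact: filtD fw' (filt_span _ Sps).
have [w'0 | w'_neq0] := eqVneq w' 0.
  exists ps; split => //; apply: filt_w => [|p p_ps]; last exact: map_f.
  by rewrite w'0; apply: filt0.
have [E [adm_wE dps']] := dual_cons dps adm_ps Gw' w'_neq0 psw.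
exists ((w', E) :: ps); split => //.
- by move=> p; rewrite inE => /predU1P [-> | /adm_ps].
- by move=> u u_ps; rewrite /= inE u_ps orbT.
- by apply: filt_w => [|p p_ps] /=; [apply/filt_gen/mem_head | rewrite inE map_f ?orbT].
Qed.

Lemma dual_basis (s : seq A) : [set` s] `<=` G ->
  exists ps, [/\ dual ps, forall p, p \in ps -> admissible p &
                 forall g, g \in s -> filt [set` map fst ps] 1 g].
Proof.
elim: s => [|w s IH] sG; first by exists [::].
have [|ps [dps adm_ps spans]] := IH; first by move=> g gs; apply: sG; rewrite /= inE gs orbT.
have [ps' [dps' adm_ps' sub w_span]] := dual_extend dps adm_ps (sG w (mem_head w s)).
exists ps'; split => // g; rewrite inE => /predU1P [-> // | /spans].
by apply: filt_sub => u /sub.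
Qed.

Theorem centralizer_e_scalar a : (exists d, filt G d a) -> (forall n, GRing.comm (e n) a) ->
  exists c, a = c%:A.
Proof.
move=> [d fa] ea.
have [s sG fs] := filt_finite fa.
have [ps [dps adm_ps spans]] := dual_basis sG.
have psG : [set` map fst ps] `<=` G by move=> u /= /mapP [p /adm_ps [Gp _ _] ->].
have fa' : filt [set` map fst ps] d a := filt_subst spans fs.
have aaK : alpha (alpha a) = a := alphaK_filt (@subset_refl _ G) fa.
have ea' n : GRing.comm (e n) (alpha a).
  have := congr1 alpha (ea n); rewrite !rmorphM /= (alphaG (Ge n)) mulNr mulrN.
  exact: oppr_inj.
pose a0 := (2 : K)^-1 *: (a + alpha a); pose a1 := (2 : K)^-1 *: (a - alpha a).
have a01 : a = a0 + a1.
  by rewrite -scalerDr addrACA subrr addr0 -mulr2n -scaler_nat scalerA mulVf // scale1r.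
have [c a0c] : exists c, a0 = c%:A.
  apply: (dual_scalar (d := d) _ dps) => [p /adm_ps [] //| |p /adm_ps [_ _ Ep]].
    exact/filtZ/filtD/filt_alpha.
  have ea0 n : GRing.comm (e n) a0 by apply/commrZ/commrD.
  have alpha_a0 : alpha a0 = a0 by rewrite linearZ rmorphD /= aaK addrC.
  by rewrite /scomm alpha_a0 (Ep _ ea0) subrr.
have a1_0 : a1 = 0.
  apply: (twisted_acomm_eq0 (d := d) (m := 0)) => [|i _].
    exact/filtZ/filtB/filt_alpha.
  have alpha_a1 : alpha a1 = - a1 by rewrite linearZ rmorphB /= aaK -scalerN opprB.
  by rewrite alpha_a1 mulNr (commrZ _ (commrB (ea i) (ea' i))) subrr.
by exists c; rewrite a01 a0c a1_0 addr0.
Qed.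
End Centralizer.

Section CliffordMap.
Variables (R : realType) (A : algType R[i]) (iota : l2 R -> A).
Hypothesis iota_lin : forall (c : R[i]) (x y z : l2 R),
  proj1_sig z = (fun n => c * proj1_sig x n + proj1_sig y n) -> iota z = c *: iota x + iota y.
Hypothesis iota_sqr : forall x : l2 R, iota x * iota x = (qform (proj1_sig x))%:A.

Definition lcomb (c : R[i]) (x y : l2 R) : l2 R :=
  exist _ (fun n => c * proj1_sig x n + proj1_sig y n)
    (ell2_lin (c := c) (proj2_sig x) (proj2_sig y)).

Lemma iota_lcomb c x y : iota (lcomb c x y) = c *: iota x + iota y.
Proof. exact: iota_lin. Qed.

Lemma range_iota_lin (c : R[i]) g h :
  range iota g -> range iota h -> range iota (c *: g + h).
Proof. by move=> [u _ <-] [v _ <-]; exists (lcomb c u v) => //; apply: iota_lcomb. Qed.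

Lemma iota_eq0 u : (forall n, proj1_sig u n = 0) -> iota u = 0.
Proof.
move=> u0; have : iota u = -1 *: iota u + iota u.
  by apply: iota_lin; apply: funext => n; rewrite u0 mulr0 addr0.
by rewrite scaleN1r addNr.
Qed.

Lemma acomm_iota u v : acomm (iota u) (iota v) =
  (qform (proj1_sig (lcomb 1 u v)) - qform (proj1_sig u) - qform (proj1_sig v))%:A.
Proof.
rewrite !scalerBl; have := iota_sqr (lcomb 1 u v).
by rewrite iota_lcomb scale1r sqrrD_acomm !iota_sqr => <-; rewrite [_%:A + _]addrC addrAC !addrK.
Qed.

Lemma acomm_range_iota g h : range iota g -> range iota h -> exists c, acomm g h = c%:A.
Proof. by move=> [u _ <-] [v _ <-]; rewrite acomm_iota; eexists. Qed.

Local Notation e n := (iota (basis_vec R n)).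

Lemma acomm_iota_basis n u : acomm (e n) (iota u) = (2 * proj1_sig u n)%:A.
Proof.
rewrite acomm_iota.
have -> : proj1_sig (lcomb 1 (basis_vec R n) u) = fun k => delta_seq R n k + proj1_sig u k.
  by apply: funext => k; rewrite /= mul1r.
rewrite qform_add_delta /= ?qform_delta; last exact: proj2_sig u.
by congr (_%:A); ring.
Qed.

Lemma iota_basis_sqr n : e n * e n = 1.
Proof. by rewrite iota_sqr qform_delta scale1r. Qed.

Lemma acomm_iota_basis_neq m n : m != n -> acomm (e m) (e n) = 0.
Proof. by move=> mn; rewrite acomm_iota_basis /= /delta_seq (negbTE mn) mulr0 scale0r. Qed.

Lemma range_iota_nondeg g : range iota g -> (forall n, acomm (e n) g = 0) -> g = 0.
Proof.
move=> [u _ <-] u0; have [A0 | A_nt] := eqVneq (1 : A) 0.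
  by rewrite -[iota u]mulr1 A0 mulr0.
apply: iota_eq0 => n; move/eqP: (u0 n).
by rewrite acomm_iota_basis scaler_eq0 (negbTE A_nt) orbF mulf_eq0 pnatr_eq0 => /eqP.
Qed.
End CliffordMap.

Section AlgHomMorphism.
Variables (R : realType) (A B : algType R[i]) (phi : A -> B) (hphi : alg_hom phi).

(* [phi] tagged with the proof [hphi], so that it can carry an lrmorphism instance *)
Definition alg_hom_fun of alg_hom phi := phi.

Lemma alg_hom_fun_is_linear : linear (alg_hom_fun hphi).
Proof. by have [phiL _] := hphi. Qed.
HB.instance Definition _ :=
  GRing.isLinear.Build R[i] A B *:%R (alg_hom_fun hphi) alg_hom_fun_is_linear.

Lemma alg_hom_fun_is_monoid_morphism : monoid_morphism (alg_hom_fun hphi).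
Proof. by have [_ [phiM phi1]] := hphi. Qed.
HB.instance Definition _ :=
  GRing.isMonoidMorphism.Build A B (alg_hom_fun hphi) alg_hom_fun_is_monoid_morphism.
End AlgHomMorphism.

Lemma clifford_parity (R : realType) (A : algType R[i]) (iota : l2 R -> A) :
  is_clifford iota -> exists alpha : A -> A, alg_hom alpha /\ forall u, alpha (iota u) = - iota u.
Proof.
move=> [[iota_lin iota_sqr] univ].
have neg_cl : clifford_map (fun u => - iota u).
  split => [c x y z hz | x]; last by rewrite mulrNN iota_sqr.
  by rewrite (iota_lin _ _ _ _ hz) opprD scalerN.
by have [[alpha [halpha alpha_iota]] _] := univ A _ neg_cl; exists alpha.
Qed.

Section GeneratedSubalgebra.
Variables (R : realType) (A : algType R[i]) (iota : l2 R -> A).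

Definition generated : {pred A} := fun x => `[< exists d, filt (range iota) d x >].

Lemma generated_subalg_closed : subalg_closed generated.
Proof.
split=> [|c x y|x y]; first by apply/asboolP; exists 0%N; apply: filt1.
  move=> /asboolP [dx fx] /asboolP [dy fy]; apply/asboolP; exists (dx + dy)%N.
  by apply: filtD; [apply/filtZ/(filt_le (leq_addr _ _) fx) | apply: filt_le (leq_addl _ _) fy].
move=> /asboolP [dx fx] /asboolP [dy fy]; apply/asboolP; exists (dx + dy)%N.
exact: filt_mul.
Qed.
HB.instance Definition _ := GRing.isSubalgClosed.Build _ _ generated
  (GRing.subalg_closed_semi generated_subalg_closed).

Inductive generated_subalg := GeneratedSubalg x of x \in generated.
Definition generated_val u := let: GeneratedSubalg x _ := u in x.
HB.instance Definition _ := [isSub for generated_val].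
HB.instance Definition _ := [Choice of generated_subalg by <:].
HB.instance Definition _ := [SubChoice_isSubAlgebra of generated_subalg by <:].

Lemma iota_generated u : iota u \in generated.
Proof. by apply/asboolP; exists 1%N; apply: filt_gen; exists u. Qed.

Definition generated_iota u := GeneratedSubalg (iota_generated u).
End GeneratedSubalgebra.

Lemma clifford_generated (R : realType) (A : algType R[i]) (iota : l2 R -> A) :
  is_clifford iota -> forall a, exists d, filt (range iota) d a.
Proof.
move=> [[iota_lin iota_sqr] univ] a.
have cl_gen : clifford_map (generated_iota iota).
  by split=> [c x y z hz | x]; apply: val_inj; [apply: iota_lin | apply: iota_sqr].
have [[phi [[phiL [phiM phi1]] phi_iota]] _] := univ _ _ cl_gen.
have val_phi : val (phi a) = a.
  apply: ((univ A iota (conj iota_lin iota_sqr)).2 (val \o phi) id) => //.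
    by split=> [c x y|]; [rewrite /= phiL | split=> [x y|]; rewrite /= ?phiM ?phi1].
  by move=> u; rewrite /= phi_iota.
by have /asboolP := valP (phi a); rewrite val_phi.
Qed.

Unset Implicit Arguments.

Theorem proposition2 (R : realType) (A : algType R[i]) (iota : l2 R -> A) :
  is_clifford iota ->
  forall a : A,
    (forall i : nat, a * iota (basis_vec R i) = iota (basis_vec R i) * a) <->
    (exists c : R[i], a = c%:A).
Proof.
move=> cl a; split=> [comm_a | [c ->] i]; last exact: comm_alg.
have [[iota_lin iota_sqr] _] := cl.
have [alpha [halpha alpha_iota]] := clifford_parity cl.
apply: (centralizer_e_scalar (alpha := alg_hom_fun halpha) (e := fun n => iota (basis_vec R n))
  (range_iota_lin iota_lin) _ (acomm_range_iota iota_lin iota_sqr) _ _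
  (iota_basis_sqr iota_sqr) (acomm_iota_basis_neq iota_lin iota_sqr)
  (range_iota_nondeg iota_lin iota_sqr) (clifford_generated cl a)).
- by move=> _ [u _ <-]; apply: alpha_iota.
- by rewrite pnatr_eq0.
- by move=> n; exists (basis_vec R n).
- by move=> n; rewrite /GRing.comm comm_a.
Qed.
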